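(* If $\Gamma\rhd_{\diamond} \Delta$ then $\mathrm{var}(\Gamma')=\mathrm{var}(\Delta')$ for some $\Gamma'\subseteq \Gamma$, $\Delta'\subseteq \Delta$.
   Context: A $\Sigma$-Nmatrix $\mathbb{M}=\langle V,\cdot_{\mathbb{M}},D\rangle$ has truth-values $V$, designated values $D\subseteq V$, and interprets each $n$-ary connective as a multi-function $V^n\to\wp(V)\setminus\emptyset$. An $\mathbb{M}$-valuation is a map $v$ from formulas to $V$ with $v(\copyright(\varphi_1,\ldots,\varphi_k))\in\copyright_{\mathbb{M}}(v(\varphi_1),\ldots,v(\varphi_k))$. The (multiple-conclusion, Scottian) logic $\rhd_{\mathbb{M}}$ is defined by $\Gamma\rhd_{\mathbb{M}}\Delta$ iff every $\mathbb{M}$-valuation with $v(\Gamma)\subseteq D$ has $v(\Delta)\cap D\neq\emptyset$. Let $\Sigma_\diamond$ contain a single binary connective $\diamond$ (platypus), and let $\mathbb{B}_\diamond=\langle\{0,1\},\cdot,\{1\}\rangle$ interpret it by $\diamond(0,0)=\{0\}$, $\diamond(1,1)=\{1\}$, $\diamond(0,1)=\diamond(1,0)=\{0,1\}$ (i.e. $\diamond(x,y)=\{x\land y,x\lor y\}$). $\rhd_\diamond$ denotes $\rhd_{\mathbb{B}_\diamond}$, and $\mathrm{var}(\Gamma)$ is the set of propositional variables occurring in $\Gamma$. *)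

From Stdlib Require Import Arith.

Inductive form : Type :=
| Var : nat -> form
| Plat : form -> form -> form.

(* Truth values V = {0,1} represented by bool; D = {true}. *)
Definition designated (x : bool) : Prop := x = true.

Definition diamond_M (x y z : bool) : Prop := z = andb x y \/ z = orb x y.

Definition valuation (v : form -> bool) : Prop :=
  forall a b, diamond_M (v a) (v b) (v (Plat a b)).

Definition fset := form -> Prop.

Definition cons_diamond (Gamma Delta : fset) : Prop :=
  forall v, valuation v ->
    (forall g, Gamma g -> designated (v g)) ->
    exists d, Delta d /\ designated (v d).

Fixpoint occurs (p : nat) (f : form) : Prop :=
  match f with
  | Var q => p = q
  | Plat a b => occurs p a \/ occurs p b
  end.

Definition var (Gamma : fset) : nat -> Prop :=
  fun p => exists g, Gamma g /\ occurs p g.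

Definition subset (A B : fset) : Prop := forall f, A f -> B f.

From Stdlib Require Import ClassicalEpsilon.

(* For a set P of variables let F(P) be the set of those p in P that occur both
   in a formula of Gamma and in a formula of Delta all of whose variables lie in
   P.  F is monotone and F(P) is included in P.  If some nonempty P satisfies
   P = F(P), the formulas of Gamma and of Delta with all variables in P have
   exactly the variables P.  Otherwise iterate F transfinitely from the set of
   all variables: the stages form a chain, every variable p has a last stage
   H(p) containing it, and p is not in F(H(p)).  Choosing in every formula f a
   variable w(f) whose stage contains all variables of f, with
   w(a <> b) in {w(a), w(b)}, the map f |-> [w(f) occurs in a formula of Gamma
   with variables in H(w(f))] is a valuation, because <>(x, y) contains x and y;
   it designates every formula of Gamma and no formula of Delta. *)

Definition incl {A : Type} (P Q : A -> Prop) : Prop := forall a, P a -> Q a.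

Definition meet {A : Type} (S : (A -> Prop) -> Prop) : A -> Prop :=
  fun a => forall P, S P -> P a.

Section Tower.

Variable A : Type.
Variable F : (A -> Prop) -> (A -> Prop).
Hypothesis F_mono : forall P Q, incl P Q -> incl (F P) (F Q).
Hypothesis F_incl : forall P, incl (F P) P.

(* The transfinite iteration of F from the full set, without ordinals. *)
Inductive tower : (A -> Prop) -> Prop :=
| tower_F P : tower P -> tower (F P)
| tower_meet S : (forall P, S P -> tower P) -> tower (meet S).

Definition extreme (C : A -> Prop) : Prop :=
  forall X, tower X -> incl C X -> incl X C \/ incl C (F X).

Lemma extreme_tower_split C :
  extreme C -> forall X, tower X -> incl C X \/ incl X (F C).
Proof.
  intros HC X TX; induction TX as [Y TY IH | S TS IH].
  - destruct IH as [CY | YFC].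
    + destruct (HC Y TY CY) as [YC | CFY]; [right; apply F_mono | left]; assumption.
    + right; intros a FYa; apply YFC, F_incl, FYa.
  - destruct (classic (exists P, S P /\ incl P (F C))) as [[P [SP PFC]] | NS].
    + right; intros a Ma; apply PFC, Ma, SP.
    + left; intros a Ca P SP.
      destruct (IH P SP) as [CP | PFC]; [apply CP, Ca |].
      exfalso; apply NS; exists P; split; assumption.
Qed.

Lemma tower_extreme C : tower C -> extreme C.
Proof.
  intros TC; induction TC as [D TD IH | S TS IH]; intros X TX CX.
  - destruct (extreme_tower_split D IH X TX) as [DX | XFD].
    + right; apply F_mono, DX.
    + left; exact XFD.
  - destruct (classic (exists P, S P /\ incl P (F X))) as [[P [SP PFX]] | NS].
    + right; intros a Ma; apply PFX, Ma, SP.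
    + left; intros a Xa P SP.
      destruct (extreme_tower_split P (IH P SP) X TX) as [PX | XFP].
      * destruct (IH P SP X TX PX) as [XP | PFX]; [apply XP, Xa |].
        exfalso; apply NS; exists P; split; assumption.
      * apply F_incl, XFP, Xa.
Qed.

Lemma tower_chain X Y : tower X -> tower Y -> incl X Y \/ incl Y X.
Proof.
  intros TX TY.
  destruct (extreme_tower_split Y (tower_extreme Y TY) X TX) as [YX | XFY].
  - right; exact YX.
  - left; intros a Xa; apply F_incl, XFY, Xa.
Qed.

Definition tower_hull (a : A) : A -> Prop := meet (fun T => tower T /\ T a).

Lemma tower_hull_tower a : tower (tower_hull a).
Proof. apply tower_meet; intros P [TP _]; exact TP. Qed.

Lemma tower_hull_self a : tower_hull a a.
Proof. intros P [_ Pa]; exact Pa. Qed.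

Lemma tower_hull_chain a b :
  incl (tower_hull a) (tower_hull b) \/ incl (tower_hull b) (tower_hull a).
Proof. apply tower_chain; apply tower_hull_tower. Qed.

Lemma tower_hull_postfix a :
  F (tower_hull a) a -> incl (tower_hull a) (F (tower_hull a)).
Proof.
  intros Fa b Hb; apply Hb; split; [apply tower_F, tower_hull_tower | exact Fa].
Qed.

End Tower.

Definition restrict (G : fset) (P : nat -> Prop) : fset :=
  fun g => G g /\ forall p, occurs p g -> P p.

Definition shared_vars (G D : fset) (P : nat -> Prop) : nat -> Prop :=
  fun p => var (restrict G P) p /\ var (restrict D P) p.

Lemma var_restrict_incl G P : incl (var (restrict G P)) P.
Proof. intros p [g [[_ Hg] Hp]]; apply Hg, Hp. Qed.

Lemma shared_vars_mono G D P Q :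
  incl P Q -> incl (shared_vars G D P) (shared_vars G D Q).
Proof.
  intros PQ p [[g [[Gg Hg] Og]] [d [[Dd Hd] Od]]].
  split; [exists g | exists d]; repeat split; auto.
Qed.

Lemma shared_vars_incl G D P : incl (shared_vars G D P) P.
Proof. intros p [Hp _]; apply (var_restrict_incl G P), Hp. Qed.

Lemma valuation_of_selection (v : form -> bool) :
  (forall a b, v (Plat a b) = v a \/ v (Plat a b) = v b) -> valuation v.
Proof.
  intros Hv a b; unfold diamond_M.
  destruct (Hv a b) as [E | E]; rewrite E;
    destruct (v a), (v b); simpl; auto.
Qed.

Definition truth (P : Prop) : bool :=
  if excluded_middle_informative P then true else false.

Lemma truth_true P : truth P = true <-> P.
Proof.
  unfold truth; destruct (excluded_middle_informative P); split; congruence.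
Qed.

Section Countermodel.

Variable H : nat -> nat -> Prop.
Hypothesis H_self : forall p, H p p.
Hypothesis H_chain : forall p q, incl (H p) (H q) \/ incl (H q) (H p).

Fixpoint top_var (f : form) : nat :=
  match f with
  | Var p => p
  | Plat a b =>
      if excluded_middle_informative (forall q, occurs q b -> H (top_var a) q)
      then top_var a else top_var b
  end.

Lemma top_var_spec f :
  occurs (top_var f) f /\ forall q, occurs q f -> H (top_var f) q.
Proof.
  induction f as [p | a [Oa Ha] b [Ob Hb]]; simpl.
  - split; [reflexivity | intros q ->; apply H_self].
  - destruct (excluded_middle_informative _) as [Hab | Hab].
    + split; [left; exact Oa | intros q [Oq | Oq]; auto].
    + split; [right; exact Ob |].
      destruct (H_chain (top_var a) (top_var b)) as [Iab | Iba].
      * intros q [Oq | Oq]; auto.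
      * exfalso; apply Hab; intros q Oq; apply Iba, Hb, Oq.
Qed.

Lemma var_restrict_top_var G f :
  G f -> var (restrict G (H (top_var f))) (top_var f).
Proof.
  intros Gf; destruct (top_var_spec f) as [Of Hf].
  exists f; repeat split; assumption.
Qed.

Lemma not_cons_diamond Gamma Delta :
  (forall p, ~ shared_vars Gamma Delta (H p) p) -> ~ cons_diamond Gamma Delta.
Proof.
  intros Hnot Hc.
  set (v f := truth (var (restrict Gamma (H (top_var f))) (top_var f))).
  destruct (Hc v) as [d [Dd Vd]].
  - apply valuation_of_selection; intros a b; unfold v; simpl.
    destruct (excluded_middle_informative _); auto.
  - intros g Gg; apply truth_true, var_restrict_top_var, Gg.
  - apply (Hnot (top_var d)); split.
    + apply truth_true, Vd.
    + apply var_restrict_top_var, Dd.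
Qed.

End Countermodel.

Theorem proposition2 (Gamma Delta : fset) :
  cons_diamond Gamma Delta ->
  exists Gamma' Delta' : fset,
    subset Gamma' Gamma /\ subset Delta' Delta /\
    (exists g, Gamma' g) /\ (exists d, Delta' d) /\
    (forall p, var Gamma' p <-> var Delta' p).
Proof.
  intros Hc.
  set (F := shared_vars Gamma Delta).
  pose proof (shared_vars_mono Gamma Delta) as F_mono.
  pose proof (shared_vars_incl Gamma Delta) as F_incl.
  destruct (classic (exists p, F (tower_hull _ F p) p)) as [[p Fp] | Hnone].
  - set (P := tower_hull _ F p).
    assert (PF : incl P (F P)) by (apply tower_hull_postfix; assumption).
    destruct (PF p (tower_hull_self _ F p)) as [[g [Gg _]] [d [Dd _]]].
    exists (restrict Gamma P), (restrict Delta P).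
    repeat split.
    + intros f [Hf _]; exact Hf.
    + intros f [Hf _]; exact Hf.
    + exists g; exact Gg.
    + exists d; exact Dd.
    + intros Hq; apply PF, (var_restrict_incl Gamma P), Hq.
    + intros Hq; apply PF, (var_restrict_incl Delta P), Hq.
  - exfalso; apply (not_cons_diamond (tower_hull _ F) (tower_hull_self _ F)
                      (tower_hull_chain _ F F_mono F_incl) Gamma Delta); [| exact Hc].
    intros p Fp; apply Hnone; exists p; exact Fp.
Qed.
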